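(* Let $\alpha\ge1$, $\beta$ odd, and let ${\cal C}=\langle (b\mid 0),(\ell\mid fh+2f)\rangle\subseteq R_{\alpha,\beta}$ be a $\mathbb{Z}_2\mathbb{Z}_4$-additive cyclic code of length $\alpha+\beta$, where $f,h,g\in\mathbb{Z}_4[x]$ with $fhg=x^\beta-1$, $b\in\mathbb{Z}_2[x]$ divides $x^\alpha-1$, and $\ell\in\mathbb{Z}_2[x]/(x^\alpha-1)$. If $g=1$ or $g=x^s-1$ for some positive divisor $s$ of $\beta$, then $\Phi({\cal C})$ is a linear binary code.
   Context: $R_{\alpha,\beta}=\mathbb{Z}_2[x]/(x^\alpha-1)\times\mathbb{Z}_4[x]/(x^\beta-1)$, identified with $\mathbb{Z}_2^\alpha\times\mathbb{Z}_4^\beta$ via coefficient vectors; it is a $\mathbb{Z}_4[x]$-module via $p\star(b\mid a)=(\tilde pb\mid pa)$, $\tilde p$ the reduction of $p$ mod 2. A $\mathbb{Z}_2\mathbb{Z}_4$-additive cyclic code is a $\mathbb{Z}_4[x]$-submodule; $\langle\cdot\rangle$ is the generated submodule. Gray map: for $u'\in\mathbb{Z}_4^n$ with $u'_i=\tilde u'_i+2\hat u'_i$, $\tilde u'_i,\hat u'_i\in\{0,1\}$, $\phi(u')=(\hat u'_0,\dots,\hat u'_{n-1},\tilde u'_0+\hat u'_0,\dots,\tilde u'_{n-1}+\hat u'_{n-1})$, and $\Phi(u\mid u')=(u\mid\phi(u'))\in\mathbb{Z}_2^{\alpha+2\beta}$. Linear means a $\mathbb{Z}_2$-subspace. *)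

From mathcomp Require Import all_boot all_order all_algebra.
Set Implicit Arguments. Unset Strict Implicit. Unset Printing Implicit Defensive.
Import GRing.Theory.
Local Open Scope ring_scope.

(* Z_2 is 'F_2 (a field, so that polynomial divisibility is available),
   Z_4 is 'Z_4 = {0,1,2,3}. *)

Definition red4 (x : 'Z_4) : 'F_2 := (nat_of_ord x)%:R.

(* coefficient vector of the class of p in R[x]/(x^n - 1):
   coordinate j = sum of the coefficients p_i with i = j (mod n) *)
Definition polyvec (R : nzRingType) (n : nat) (p : {poly R}) : 'rV[R]_n :=
  \row_(j < n) \sum_(i < size p | (i %% n == j)%N) p`_i.

Definition vecpoly (R : nzRingType) (n : nat) (v : 'rV[R]_n) : {poly R} :=
  \sum_(i < n) v 0 i *: 'X^i.

Definition Ramb (alpha beta : nat) : Type := ('rV['F_2]_alpha * 'rV['Z_4]_beta)%type.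

Definition Radd alpha beta (u v : Ramb alpha beta) : Ramb alpha beta :=
  (u.1 + v.1, u.2 + v.2).

(* Z_4[x]-module action  p * (b | a) = (~p b | p a)  (products mod x^n - 1) *)
Definition act alpha beta (p : {poly 'Z_4}) (u : Ramb alpha beta) : Ramb alpha beta :=
  (polyvec alpha (map_poly red4 p * vecpoly u.1),
   polyvec beta (p * vecpoly u.2)).

Definition gen2 alpha beta (g1 g2 : Ramb alpha beta) : Ramb alpha beta -> Prop :=
  fun z => exists p q : {poly 'Z_4}, z = Radd (act p g1) (act q g2).

Definition hatb (x : 'Z_4) : 'F_2 := (nat_of_ord x %/ 2)%N%:R.
Definition tilb (x : 'Z_4) : 'F_2 := (nat_of_ord x %% 2)%N%:R.

Definition phi4 n (u : 'rV['Z_4]_n) : 'rV['F_2]_(n + n) :=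
  row_mx (\row_i hatb (u 0 i)) (\row_i (tilb (u 0 i) + hatb (u 0 i))).

Definition Gray alpha beta (z : Ramb alpha beta) : 'rV['F_2]_(alpha + (beta + beta)) :=
  row_mx z.1 (phi4 z.2).

Definition Gray_image alpha beta (C : Ramb alpha beta -> Prop) :
  'rV['F_2]_(alpha + (beta + beta)) -> Prop :=
  fun w => exists z, C z /\ w = Gray z.

Definition linear_binary N (S : 'rV['F_2]_N -> Prop) : Prop :=
  [/\ S 0, (forall u v, S u -> S v -> S (u + v)) & (forall (c : 'F_2) u, S u -> S (c *: u))].

(* Since Phi(u) + Phi(v) = Phi(u + v + (0 | 2 u'v')), where u', v' are the Z_4
   parts and u'v' is their componentwise product, Phi(C) is linear as soon as C
   contains (0 | 2 u'v') for all u, v in C.  The Z_4 parts of elements of C are the q w with w = f h + 2 f, and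
   2 q w = 2 q f h.  If g = 1, then f h = x^beta - 1 and 2 u'v' = 0.  If
   g = x^s - 1, then f h = 1 + x^s + ... + x^(beta - s), so 2 u' and 2 v' are
   s-periodic; hence so is 2 u'v', which is determined by them, and an
   s-periodic vector with entries in {0, 2} is Q f h = Q w for some Q with even
   coefficients. *)
From HB Require Import structures.
From mathcomp Require Import all_boot all_order all_algebra.
From mathcomp Require Import zify.
Set Implicit Arguments. Unset Strict Implicit. Unset Printing Implicit Defensive.
Import GRing.Theory.
Local Open Scope ring_scope.

Lemma size_rmodp_Xn_sub1 {R : nzRingType} n (p : {poly R}) : (0 < n)%N ->
  (size (Pdiv.CommonRing.rmodp p ('X^n - 1)) <= n)%N.
Proof.
move=> n_gt0; rewrite -ltnS -(size_Xn_sub_1 R n_gt0) Pdiv.Ring.ltn_rmodp.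
by rewrite -size_poly_eq0 size_Xn_sub_1.
Qed.

Section PolyVec.
Variables (R : nzRingType) (n : nat).
Implicit Types p q r : {poly R}.

Lemma polyvecE N p (j : 'I_n) : (size p <= N)%N ->
  polyvec n p 0 j = \sum_(i < N | (i %% n == j)%N) p`_i.
Proof.
move=> leN; rewrite mxE (big_ord_widen_cond _ (fun i => i %% n == j)%N (fun i => p`_i) leN).
rewrite big_mkcond [RHS]big_mkcond.
apply: eq_bigr => i _; case: (i %% n == j)%N => //=; case: ltnP => // sizep.
by rewrite nth_default.
Qed.
Arguments polyvecE {N p} j.

Lemma polyvecB : zmod_morphism (polyvec n : {poly R} -> 'rV_n).
Proof.
move=> p q; apply/rowP => j.
set N := maxn (size p) (size q).
have leNp : (size p <= N)%N := leq_maxl _ _.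
have leNq : (size q <= N)%N := leq_maxr _ _.
have leNpq : (size (p - q)%R <= N)%N by rewrite (leq_trans (size_polyD _ _)) ?size_polyN.
rewrite [in RHS]mxE (polyvecE j leNpq) (polyvecE j leNp) mxE (polyvecE j leNq) -sumrB.
by apply: eq_bigr => i _; rewrite coefB.
Qed.

HB.instance Definition _ := GRing.isZmodMorphism.Build {poly R} 'rV_n (polyvec n) polyvecB.

Lemma polyvec_small p (j : 'I_n) : (size p <= n)%N -> polyvec n p 0 j = p`_j.
Proof.
by move=> lepn; rewrite (polyvecE j lepn) (big_pred1 j) // => i; rewrite /= modn_small.
Qed.

Lemma coef_vecpoly (v : 'rV[R]_n) (j : 'I_n) : (vecpoly v)`_j = v 0 j.
Proof. by rewrite coef_sumMXn (big_pred1 j). Qed.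

Lemma size_vecpoly (v : 'rV[R]_n) : (size (vecpoly v) <= n)%N.
Proof.
apply/leq_sizeP => k lenk; rewrite coef_sumMXn big1 // => i /eqP eik.
by move: (ltn_ord i); rewrite eik ltnNge lenk.
Qed.

Lemma vecpoly0 : vecpoly (0 : 'rV[R]_n) = 0.
Proof. by rewrite /vecpoly big1 // => i _; rewrite mxE scale0r. Qed.

Lemma vecpolyK : cancel (@vecpoly R n) (polyvec n).
Proof.
by move=> v; apply/rowP => j; rewrite (polyvec_small _ (size_vecpoly v)) coef_vecpoly.
Qed.

Lemma polyvec_mulXn p : polyvec n (p * 'X^n) = polyvec n p.
Proof.
apply/rowP => j.
have leN : (size (p * 'X^n)%R <= n + size p)%N.
  by rewrite (leq_trans (size_polyMleq _ _)) // size_polyXn addnS addnC.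
rewrite (polyvecE j leN) (polyvecE j (leqnn _)).
rewrite -(big_mkord (fun i => i %% n == j)%N) -(big_mkord (fun i => i %% n == j)%N).
rewrite (big_cat_nat (leq0n n) (leq_addr _ _)) /= big1_seq ?add0r; last first.
  by move=> i /andP[_]; rewrite mem_iota add0n subn0 => /andP[_ ltin]; rewrite coefMXn ltin.
rewrite -{1}(add0n n) big_addn addKn.
by apply: eq_big => [i|i _]; rewrite ?modnDr // coefMXn ltnNge leq_addl addnK.
Qed.

Lemma polyvec_mul_Xn_sub1 p : polyvec n (p * ('X^n - 1)) = 0.
Proof. by rewrite mulrBr mulr1 raddfB /= polyvec_mulXn subrr. Qed.

Hypothesis n_gt0 : (0 < n)%N.

Lemma polyvec_eq0 r : polyvec n r = 0 -> exists d, r = d * ('X^n - 1).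
Proof.
move=> r0; exists (Pdiv.CommonRing.rdivp r ('X^n - 1)).
have := Pdiv.RingMonic.rdivp_eq (monic_Xn_sub_1 R n_gt0) r.
set d := Pdiv.CommonRing.rdivp _ _; set m := Pdiv.CommonRing.rmodp _ _ => r_eq.
suff m0 : m = 0 by rewrite {1}r_eq m0 addr0.
have size_m : (size m <= n)%N := size_rmodp_Xn_sub1 r n_gt0.
have m0 : polyvec n m = 0.
  rewrite -[m](addKr (d * ('X^n - 1))) -r_eq raddfD raddfN /= r0.
  by rewrite polyvec_mul_Xn_sub1 oppr0 add0r.
apply/polyP => k; rewrite coef0; case: (ltnP k n) => [ltkn|lenk]; last first.
  by rewrite nth_default // (leq_trans size_m).
by rewrite -[k]/(val (Ordinal ltkn)) -polyvec_small // m0 mxE.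
Qed.

Lemma polyvec_mul_vecpoly q r : polyvec n (q * vecpoly (polyvec n r)) = polyvec n (q * r).
Proof.
have [d r_eq] : exists d, vecpoly (polyvec n r) - r = d * ('X^n - 1).
  by apply: polyvec_eq0; rewrite raddfB /= vecpolyK subrr.
by apply/eqP; rewrite -subr_eq0 -raddfB /= -mulrBr r_eq mulrA polyvec_mul_Xn_sub1.
Qed.
End PolyVec.

Section GeomX.
Variables (R : comNzRingType) (s m : nat).
Hypothesis s_gt0 : (0 < s)%N.

Definition geomX : {poly R} := \sum_(k < m) 'X^(k * s).

Lemma geomX_mul_Xs_sub1 : geomX * ('X^s - 1) = 'X^(m * s) - 1.
Proof.
rewrite mulr_suml (eq_bigr (fun k : 'I_m => 'X^(k.+1 * s) - 'X^(k * s))); last first.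
  by move=> k _; rewrite mulrBr mulr1 -exprD mulSn addnC.
by rewrite -(big_mkord xpredT (fun k => 'X^(k.+1 * s) - 'X^(k * s))) telescope_sumr.
Qed.

Lemma coef_mul_geomX (A : {poly R}) i : (size A <= s)%N ->
  (A * geomX)`_i = if (i < m * s)%N then A`_(i %% s) else 0.
Proof.
move=> size_A; rewrite mulr_sumr coef_sum.
have coef_shift (k : nat) : (A * 'X^(k * s))`_i = if (i %/ s == k)%N then A`_(i %% s) else 0.
  rewrite coefMXn; case: (ltnP i (k * s)) => [ltik|leki].
    by case: eqP => // ik; move: ltik; rewrite -ik ltnNge leq_trunc_div.
  case: eqP => [<-|ik]; first by rewrite [X in (X - _)%N](divn_eq i s) addKn.
  rewrite nth_default // (leq_trans size_A) //.
  have ltk : (k < i %/ s)%N.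
    by rewrite ltn_neqAle leq_divRL // leki andbT; apply/eqP => ki; apply: ik.
  move: ltk; rewrite leq_divRL // mulSn; lia.
under eq_bigr do rewrite coef_shift.
rewrite -big_mkcond /=; case: ltnP => [ltims|lemsi].
  have ltm : (i %/ s < m)%N by rewrite ltn_divLR.
  by rewrite (big_pred1 (Ordinal ltm)) // => k; rewrite /= -val_eqE /= eq_sym.
rewrite big_pred0 // => k; apply/eqP => ik.
by move: (ltn_ord k); rewrite -ik ltn_divLR // ltnNge lemsi.
Qed.

Lemma polyvec_mul_geomX (A : {poly R}) (j : 'I_(m * s)) : (size A <= s)%N ->
  polyvec (m * s) (A * geomX) 0 j = A`_(j %% s).
Proof.
move=> size_A; have size_AP : (size (A * geomX)%R <= m * s)%N.
  by apply/leq_sizeP => i; rewrite coef_mul_geomX // leqNgt => /negbTE ->.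
by rewrite polyvec_small // coef_mul_geomX // ltn_ord.
Qed.

Lemma polyvec_geomX_periodic (q : {poly R}) : exists2 A : {poly R}, (size A <= s)%N &
  forall j : 'I_(m * s), polyvec (m * s) (q * geomX) 0 j = A`_(j %% s).
Proof.
have := Pdiv.RingMonic.rdivp_eq (monic_Xn_sub_1 R s_gt0) q.
set d := Pdiv.CommonRing.rdivp _ _; set A := Pdiv.CommonRing.rmodp _ _ => q_eq.
exists A => [|j]; first exact: size_rmodp_Xn_sub1.
rewrite q_eq mulrDl -mulrA [_ * geomX]mulrC geomX_mul_Xs_sub1 raddfD /=.
by rewrite polyvec_mul_Xn_sub1 add0r polyvec_mul_geomX // size_rmodp_Xn_sub1.
Qed.

End GeomX.

Lemma red4B : zmod_morphism red4.
Proof. by do 2![case=> [[|[|[|[|//]]]] ?]]; apply/val_inj. Qed.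

HB.instance Definition _ := GRing.isZmodMorphism.Build 'Z_4 'F_2 red4 red4B.

Lemma mulr4n_Z4 (a : 'Z_4) : a *+ 4 = 0.
Proof. by case: a => [[|[|[|[|//]]]] ?]; apply/val_inj. Qed.

Lemma F2_eq01 (c : 'F_2) : c = 0 \/ c = 1.
Proof. by case: c => [[|[|//]] ?]; [left|right]; apply/val_inj. Qed.

(* [halfmul x y] is [x * y / 2] computed in [Z] when [x] and [y] are even. *)
Definition halfmul (x y : 'Z_4) : 'Z_4 := if (x == 2%:R) && (y == 2%:R) then 2%:R else 0.

Lemma halfmul_mul2 (a b : 'Z_4) : halfmul (a *+ 2) (b *+ 2) = (a * b) *+ 2.
Proof. by case: a => [[|[|[|[|//]]]] ?]; case: b => [[|[|[|[|//]]]] ?]; apply/val_inj. Qed.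

Lemma halfmul_mulr2n (x y : 'Z_4) : halfmul x y *+ 2 = 0.
Proof. by rewrite /halfmul; case: ifP => _; apply/val_inj. Qed.

Lemma red4_halfmul (x y : 'Z_4) : red4 (halfmul x y) = 0.
Proof. by rewrite /halfmul; case: ifP => _; apply/val_inj. Qed.

Lemma hatbD (a b : 'Z_4) : hatb a + hatb b = hatb (a + b + (a * b) *+ 2).
Proof. by case: a => [[|[|[|[|//]]]] ?]; case: b => [[|[|[|[|//]]]] ?]; apply/val_inj. Qed.

Lemma tilb_hatbD (a b : 'Z_4) : (tilb a + hatb a) + (tilb b + hatb b) =
  tilb (a + b + (a * b) *+ 2) + hatb (a + b + (a * b) *+ 2).
Proof. by case: a => [[|[|[|[|//]]]] ?]; case: b => [[|[|[|[|//]]]] ?]; apply/val_inj. Qed.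

Definition twice_hadamard n (u v : 'rV['Z_4]_n) : 'rV['Z_4]_n :=
  \row_j ((u 0 j * v 0 j) *+ 2).

Section GrayMap.
Variables alpha beta : nat.
Implicit Types z : Ramb alpha beta.

Lemma GrayD z z' :
  Gray z + Gray z' = Gray (Radd (Radd z z') (0, twice_hadamard z.2 z'.2)).
Proof.
rewrite /Gray /phi4 !add_row_mx /= addr0.
by congr (row_mx _ (row_mx _ _)); apply/rowP => j; rewrite !mxE ?hatbD ?tilb_hatbD.
Qed.

Lemma Gray0 : Gray ((0, 0) : Ramb alpha beta) = 0.
Proof.
rewrite /Gray /phi4 -!row_mx0.
by congr (row_mx _ (row_mx _ _)); apply/rowP => j; rewrite !mxE; apply/val_inj.
Qed.

Lemma Gray_image_linear (C : Ramb alpha beta -> Prop) :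
  C (0, 0) -> (forall z z', C z -> C z' -> C (Radd z z')) ->
  (forall z z', C z -> C z' -> C (0, twice_hadamard z.2 z'.2)) ->
  linear_binary (Gray_image C).
Proof.
move=> C0 CD Chad; have GC0 : Gray_image C 0 by exists (0, 0); rewrite Gray0.
split=> // [_ _ [z [Cz ->]] [z' [Cz' ->]]|c u Cu].
  by exists (Radd (Radd z z') (0, twice_hadamard z.2 z'.2)); rewrite GrayD; split; auto.
by case: (F2_eq01 c) => ->; rewrite ?scale0r ?scale1r.
Qed.

End GrayMap.

Section TwiceHadamard.
Variables f h : {poly 'Z_4}.
Local Notation w := (f * h + 2%:R * f).

Lemma polyvec_mulr2n n q : polyvec n (q * w) *+ 2 = polyvec n ((q *+ 2) * (f * h)).
Proof.
rewrite -raddfMn /= mulrDr mulrnDl mulr_natl mulrnAr -mulrnA -mulrnAl.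
suff -> : q * f *+ (2 * 2) = 0 by rewrite addr0.
by apply/polyP => i; rewrite coefMn mulr4n_Z4 coef0.
Qed.

Lemma twice_hadamardE n q1 q2 :
  twice_hadamard (polyvec n (q1 * w)) (polyvec n (q2 * w)) =
  \row_j halfmul (polyvec n ((q1 *+ 2) * (f * h)) 0 j)
                 (polyvec n ((q2 *+ 2) * (f * h)) 0 j).
Proof.
by apply/rowP => j; rewrite [LHS]mxE [RHS]mxE -!polyvec_mulr2n !mulmxnE halfmul_mul2.
Qed.

Lemma twice_hadamard_Xn_sub1 n q1 q2 : f * h = 'X^n - 1 ->
  twice_hadamard (polyvec n (q1 * w)) (polyvec n (q2 * w)) = 0.
Proof.
by move=> fh; rewrite twice_hadamardE fh; apply/rowP => j; rewrite !polyvec_mul_Xn_sub1 !mxE.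
Qed.

Lemma twice_hadamard_geomX s m q1 q2 : (0 < s)%N -> f * h = geomX _ s m ->
  exists2 Q, map_poly red4 Q = 0 &
  polyvec (m * s) (Q * w) =
  twice_hadamard (polyvec (m * s) (q1 * w)) (polyvec (m * s) (q2 * w)).
Proof.
move=> s_gt0 fh; rewrite twice_hadamardE fh.
have [A size_A A_per] := polyvec_geomX_periodic m s_gt0 (q1 *+ 2).
have [B size_B B_per] := polyvec_geomX_periodic m s_gt0 (q2 *+ 2).
pose Q := \poly_(i < s) halfmul A`_i B`_i.
have Q2 : Q *+ 2 = 0.
  apply/polyP => i; rewrite coefMn coef_poly coef0.
  by case: ifP; rewrite ?halfmul_mulr2n ?mul0rn.
exists Q.
  apply/polyP => i; rewrite coef_map /= coef_poly coef0.
  by case: ifP; rewrite ?red4_halfmul ?raddf0.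
rewrite mulrDr [Q * (2%:R * f)]mulrCA mulr_natl -mulrnAl Q2 mul0r addr0.
apply/rowP => j; rewrite polyvec_mul_geomX ?size_poly // mxE A_per B_per.
by rewrite coef_poly ltn_pmod.
Qed.

Lemma twice_hadamard_closed g n q1 q2 : (0 < n)%N -> f * h * g = 'X^n - 1 ->
  (g = 1 \/ exists s : nat, [/\ (0 < s)%N, (s %| n)%N & g = 'X^s - 1]) ->
  exists2 Q, map_poly red4 Q = 0 &
  polyvec n (Q * w) = twice_hadamard (polyvec n (q1 * w)) (polyvec n (q2 * w)).
Proof.
move=> n_gt0 fhg [g1|[s [s_gt0 /dvdnP[m n_eq] g_eq]]].
  have fh : f * h = 'X^n - 1 by rewrite -fhg g1 mulr1.
  exists 0; first exact: raddf0.
  by rewrite twice_hadamard_Xn_sub1 // mul0r raddf0.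
have fh : f * h = geomX _ s m.
  apply: (monic_rreg (monic_Xn_sub_1 _ s_gt0)).
  by rewrite /= geomX_mul_Xs_sub1 -g_eq fhg n_eq.
by rewrite n_eq; apply: twice_hadamard_geomX.
Qed.

End TwiceHadamard.

Section Submodule.
Variables alpha beta : nat.
Implicit Types (g z : Ramb alpha beta) (p q : {poly 'Z_4}).

Lemma act0 z : act 0 z = (0, 0).
Proof. by rewrite /act raddf0 !mul0r !raddf0. Qed.

Lemma actD p q z : act (p + q) z = Radd (act p z) (act q z).
Proof. by rewrite /act /Radd raddfD !mulrDl !raddfD. Qed.

Lemma act_polyvec q (u : 'rV_alpha) r : (0 < beta)%N ->
  act q ((u, polyvec beta r) : Ramb alpha beta) =
  (polyvec alpha (map_poly red4 q * vecpoly u), polyvec beta (q * r)).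
Proof. by move=> beta_gt0; rewrite /act polyvec_mul_vecpoly. Qed.

Lemma gen2_0 (g1 g2 : Ramb alpha beta) : gen2 g1 g2 (0, 0).
Proof. by exists 0, 0; rewrite !act0 /Radd /= !addr0. Qed.

Lemma gen2D (g1 g2 : Ramb alpha beta) z z' :
  gen2 g1 g2 z -> gen2 g1 g2 z' -> gen2 g1 g2 (Radd z z').
Proof.
move=> [p [q ->]] [p' [q' ->]]; exists (p + p'), (q + q').
by rewrite !actD /Radd /=; congr pair; rewrite addrACA.
Qed.

End Submodule.

Theorem mainTheorem7 (alpha beta : nat) (b : {poly 'F_2}) (l : 'rV['F_2]_alpha)
    (f h g : {poly 'Z_4}) :
  (1 <= alpha)%N -> odd beta ->
  f * h * g = 'X^beta - 1 ->
  b %| 'X^alpha - 1 ->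
  (g = 1 \/ exists s : nat, [/\ (0 < s)%N, (s %| beta)%N & g = 'X^s - 1]) ->
  linear_binary
    (Gray_image (gen2 (polyvec alpha b, 0 : 'rV['Z_4]_beta)
                      (l, polyvec beta (f * h + 2%:R * f)))).
Proof.
move=> _ odd_beta fhg _ hg; have beta_gt0 : (0 < beta)%N by case: (beta) odd_beta.
apply: Gray_image_linear => [|z z'|_ _ [p1 [q1 ->]] [p2 [q2 ->]]].
- exact: gen2_0.
- exact: gen2D.
have [Q redQ QE] := twice_hadamard_closed q1 q2 beta_gt0 fhg hg.
exists 0, Q; rewrite act0 !act_polyvec // /Radd /= vecpoly0.
by rewrite !mulr0 redQ mul0r !raddf0 !add0r QE.
Qed.
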